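(* Let $X,Y\subseteq\mathbb{R}$ with $|X|=|Y|=\mathfrak{c}$ and $|X\setminus Y|=\mathfrak{c}$. Then $$\mathcal{B}_{f_X\oplus f_E^{\mathbb{R}\setminus X}}(\mathbb{R})\neq\mathcal{B}_{f_Y\oplus f_E^{\mathbb{R}\setminus Y}}(\mathbb{R}).$$
   Context: $\mathfrak{c}=|\mathbb{R}|$. For a set $Z$, a two-point selection on $Z$ is a map $f$ from the two-element subsets of $Z$ to $Z$ with $f(F)\in F$; write $r<_f s$ if $f(\{r,s\})=r$, and let $\tau_f$ be the topology on $Z$ generated (as a subbase) by all sets $\{x: x<_f r\}$ and $\{x: r<_f x\}$, $r\in Z$. For $Z\subseteq\mathbb{R}$ with $|Z|=\mathfrak{c}$, $f_Z$ denotes a two-point selection on $Z$ for which $\tau_{f_Z}$ is the discrete topology on $Z$. For $W\subseteq\mathbb{R}$, $f_E^W$ is the Euclidean selection on $W$: $f_E^W(\{r,s\})=\min\{r,s\}$. For a partition $\{P,Q\}$ of $\mathbb{R}$ and selections $f$ on $P$, $g$ on $Q$, the selection $f\oplus g$ on $\mathbb{R}$ is defined by $(f\oplus g)(\{x,y\})=x$ if $x\in P,y\in Q$; $=f(\{x,y\})$ if $x,y\in P$; $=g(\{x,y\})$ if $x,y\in Q$. For a selection $h$ on $\mathbb{R}$, $\mathcal{B}_h(\mathbb{R})$ is the $\sigma$-algebra generated by $\tau_h$. *)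

From Stdlib Require Import Reals Classical ClassicalEpsilon.
Open Scope R_scope.

Definition has_card_c (Z : R -> Prop) : Prop :=
  exists (g : {x : R | Z x} -> R), (forall a b, g a = g b -> a = b)
                                 /\ (forall y, exists a, g a = y).

(* f : R -> R -> R is a two-point selection on Z: on two-element subsets
   {r,s} of Z (r <> s), f {r,s} = f r s = f s r is an element of {r,s}.
   Values outside of Z are irrelevant. *)
Definition is_selection (Z : R -> Prop) (f : R -> R -> R) : Prop :=
  forall r s, Z r -> Z s -> r <> s -> f r s = f s r /\ (f r s = r \/ f r s = s).

Definition sel_lt (f : R -> R -> R) (r s : R) : Prop := r <> s /\ f r s = r.

Definition sel_subbase (Z : R -> Prop) (f : R -> R -> R) (U : R -> Prop) : Prop :=
  exists r, Z r /\
   ((forall x, U x <-> (Z x /\ sel_lt f x r)) \/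
    (forall x, U x <-> (Z x /\ sel_lt f r x))).

Definition is_topology_on (Z : R -> Prop) (T : (R -> Prop) -> Prop) : Prop :=
  (forall U, T U -> forall x, U x -> Z x) /\
  T Z /\
  (forall U V, T U -> T V -> T (fun x => U x /\ V x)) /\
  (forall F : (R -> Prop) -> Prop, (forall U, F U -> T U) ->
       T (fun x => exists U, F U /\ U x)).

Definition gen_topology (Z : R -> Prop) (S : (R -> Prop) -> Prop) (U : R -> Prop) : Prop :=
  forall T, is_topology_on Z T -> (forall V, S V -> T V) -> T U.

Definition tau (Z : R -> Prop) (f : R -> R -> R) : (R -> Prop) -> Prop :=
  gen_topology Z (sel_subbase Z f).

Definition tau_discrete (Z : R -> Prop) (f : R -> R -> R) : Prop :=
  forall U : R -> Prop, (forall x, U x -> Z x) -> tau Z f U.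

Definition f_E : R -> R -> R := Rmin.

Definition sel_oplus (P : R -> Prop) (f g : R -> R -> R) (x y : R) : R :=
  if excluded_middle_informative (P x) then
    (if excluded_middle_informative (P y) then f x y else x)
  else
    (if excluded_middle_informative (P y) then y else g x y).

Definition fullR : R -> Prop := fun _ => True.

Definition is_sigma_algebra (M : (R -> Prop) -> Prop) : Prop :=
  M fullR /\
  (forall A, M A -> M (fun x => ~ A x)) /\
  (forall A : nat -> R -> Prop, (forall n, M (A n)) -> M (fun x => exists n, A n x)).

Definition gen_sigma (G : (R -> Prop) -> Prop) (A : R -> Prop) : Prop :=
  forall M, is_sigma_algebra M -> (forall U, G U -> M U) -> M A.

Definition Borel_sel (h : R -> R -> R) : (R -> Prop) -> Prop :=
  gen_sigma (tau fullR h).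

(* Write h_X = f_X (+) f_E.  Since f_X and h_X agree on X, the trace of tau_{h_X}
   on X contains tau_{f_X}, which is discrete; X itself is h_X-Borel, so every
   subset of X \ Y lies in B_{h_X}.  Off Y, on the other hand, every subbasic
   set of tau_{h_Y} is Euclidean open, so every set in B_{h_Y} agrees on R \ Y
   with a Euclidean Borel set.  Euclidean Borel sets have countably branching
   codes, and codes inject into R (node labels -> bit sequences -> Cantor set).
   Diagonalising along a surjection X \ Y -> R yields a subset of X \ Y that
   agrees with no coded set on X \ Y. *)

From Stdlib Require Import Reals Lra Lia ZArith Classical ClassicalEpsilon FunctionalExtensionality PropExtensionality.
From mathcomp Require Import ssrfun choice.
Open Scope R_scope.

Lemma pred_ext (A B : R -> Prop) : (forall x, A x <-> B x) -> A = B.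
Proof.
  intro H. apply functional_extensionality. intro x.
  apply propositional_extensionality. apply H.
Qed.

Lemma tau_subbase Z f U : sel_subbase Z f U -> tau Z f U.
Proof. intros H T _ HS. apply HS, H. Qed.

Lemma tau_inter Z f U V :
  tau Z f U -> tau Z f V -> tau Z f (fun x => U x /\ V x).
Proof. intros HU HV T HT HS. apply HT; [apply HU | apply HV]; assumption. Qed.

Lemma tau_union Z f F :
  (forall U, F U -> tau Z f U) -> tau Z f (fun x => exists U, F U /\ U x).
Proof. intros HF T HT HS. apply HT. intros U FU. apply HF; assumption. Qed.

Lemma tau_fullR_topology h : is_topology_on fullR (tau fullR h).
Proof.
  split; [|split; [|split]].
  - intros; exact I.
  - intros T HT _. apply HT.
  - apply tau_inter.
  - apply tau_union.
Qed.

Definition trace_on (T : (R -> Prop) -> Prop) (Z U : R -> Prop) : Prop :=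
  exists V, T V /\ forall x, U x <-> V x /\ Z x.

Lemma trace_topology T Z : is_topology_on fullR T -> is_topology_on Z (trace_on T Z).
Proof.
  intros (_ & Tfull & Tinter & Tunion). split; [|split; [|split]].
  - intros U [V [_ HV]] x Ux. apply HV, Ux.
  - exists fullR. split; [exact Tfull|]. unfold fullR; tauto.
  - intros U1 U2 [V1 [T1 H1]] [V2 [T2 H2]].
    exists (fun x => V1 x /\ V2 x). split; [apply Tinter; assumption|].
    intro x. rewrite H1, H2. tauto.
  - intros F HF.
    exists (fun x => exists V, (exists U, F U /\ T V /\ forall z, U z <-> V z /\ Z z) /\ V x).
    split.
    + apply Tunion. intros V [U [_ [TV _]]]. exact TV.
    + intro x. split.
      * intros [U [FU Ux]]. destruct (HF U FU) as [V [TV HV]].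
        destruct (proj1 (HV x) Ux) as [Vx Zx]. split; [|exact Zx]. exists V. split; [exists U|]; auto.
      * intros [[V [[U [FU [_ HV]]] Vx]] Zx]. exists U. split; [exact FU|]. apply HV; auto.
Qed.

Lemma gen_sigma_sigma_algebra G : is_sigma_algebra (gen_sigma G).
Proof.
  split; [|split].
  - intros M HM _. apply HM.
  - intros A HA M HM HG. apply HM, HA; assumption.
  - intros A HA M HM HG. apply HM. intro n. apply HA; assumption.
Qed.

Lemma sigma_algebra_inter M A B :
  is_sigma_algebra M -> M A -> M B -> M (fun x => A x /\ B x).
Proof.
  intros (_ & Mcompl & Munion) MA MB.
  set (C := fun n x => match n with O => ~ A x | _ => ~ B x end).
  assert (MC : M (fun x => ~ exists n, C n x)).
  { apply Mcompl, Munion. intros [|n]; apply Mcompl; assumption. }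
  replace (fun x => A x /\ B x) with (fun x => ~ exists n, C n x); [exact MC|].
  apply pred_ext. intro x. split.
  - intro H. split; apply NNPP; intro N; apply H; [exists O | exists 1%nat]; exact N.
  - intros [Ax Bx] [[|n] Cx]; contradiction.
Qed.

Lemma tau_Borel_sel h U : tau fullR h U -> Borel_sel h U.
Proof. intros HU M _ HG. apply HG, HU. Qed.

Section Oplus.
Variables (P : R -> Prop) (f g : R -> R -> R).
Let h := sel_oplus P f g.

Lemma sel_lt_oplus_in x y : P x -> P y -> (sel_lt h x y <-> sel_lt f x y).
Proof.
  intros Px Py. unfold h, sel_lt, sel_oplus.
  destruct (excluded_middle_informative (P x)), (excluded_middle_informative (P y)); tauto.
Qed.

Lemma sel_lt_oplus_out x y : ~ P x -> ~ P y -> (sel_lt h x y <-> sel_lt g x y).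
Proof.
  intros nPx nPy. unfold h, sel_lt, sel_oplus.
  destruct (excluded_middle_informative (P x)), (excluded_middle_informative (P y)); tauto.
Qed.

Lemma sel_lt_oplus_in_out x y : P x -> ~ P y -> sel_lt h x y.
Proof.
  intros Px nPy. unfold h, sel_lt, sel_oplus. split; [intros <-; contradiction|].
  destruct (excluded_middle_informative (P x)), (excluded_middle_informative (P y)); tauto.
Qed.

Lemma sel_lt_oplus_out_in x y : ~ P x -> P y -> ~ sel_lt h x y.
Proof.
  intros nPx Py [ne e]. revert e. unfold h, sel_oplus.
  destruct (excluded_middle_informative (P x)), (excluded_middle_informative (P y)); try tauto.
  intros ->. exact (ne eq_refl).
Qed.

End Oplus.

Lemma sel_lt_f_E x y : sel_lt f_E x y <-> x < y.
Proof.
  unfold sel_lt, f_E. split.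
  - intros [ne e]. destruct (Rlt_le_dec x y) as [lt|le]; [exact lt|].
    rewrite Rmin_right in e by exact le. lra.
  - intro lt. split; [lra|]. apply Rmin_left. lra.
Qed.

Lemma oplus_part_Borel X fX : Borel_sel (sel_oplus X fX f_E) X.
Proof.
  set (h := sel_oplus X fX f_E).
  (* If R \ X has a least element m then X = {x | x <_h m}; otherwise
     R \ X is the union of the sets {x | y <_h x}, y outside X. *)
  destruct (classic (exists m, ~ X m /\ forall y, ~ X y -> m <= y))
    as [[m [nXm m_least]] | no_least].
  - replace X with (fun x => sel_lt h x m).
    { apply tau_Borel_sel, tau_subbase. exists m. split; [exact I|]. left. unfold fullR; tauto. }
    apply pred_ext. intro x. split.
    + intro lt_xm. apply NNPP. intro nXx. pose proof (m_least x nXx).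
      apply (sel_lt_oplus_out X fX f_E x m nXx nXm), sel_lt_f_E in lt_xm. lra.
    + intro Xx. apply sel_lt_oplus_in_out; assumption.
  - set (F := fun V : R -> Prop => exists y, ~ X y /\ V = sel_lt h y).
    assert (compl_X : forall x, ~ X x <-> exists V, F V /\ V x).
    { intro x. split.
      - intro nXx.
        assert (exists y, ~ X y /\ y < x) as [y [nXy lt_yx]].
        { apply NNPP. intro N. apply no_least. exists x. split; [exact nXx|].
          intros y nXy. apply Rnot_lt_le. intro lt. apply N. exists y; auto. }
        exists (sel_lt h y). split; [exists y; auto|].
        apply (sel_lt_oplus_out X fX f_E y x nXy nXx), sel_lt_f_E, lt_yx.
      - intros [V [[y [nXy ->]] lt_yx]] Xx.
        exact (sel_lt_oplus_out_in X fX f_E y x nXy Xx lt_yx). }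
    assert (open_union : Borel_sel h (fun x => exists V, F V /\ V x)).
    { apply tau_Borel_sel, tau_union. intros V [y [_ ->]]. apply tau_subbase.
      exists y. split; [exact I|]. right. unfold fullR; tauto. }
    replace X with (fun x => ~ exists V, F V /\ V x).
    + apply gen_sigma_sigma_algebra, open_union.
    + apply pred_ext. intro x. rewrite <- compl_X. tauto.
Qed.

Lemma discrete_part_trace X fX g S :
  tau_discrete X fX -> (forall x, S x -> X x) ->
  trace_on (tau fullR (sel_oplus X fX g)) X S.
Proof.
  intros discrete SX. apply (discrete S SX).
  - apply trace_topology, tau_fullR_topology.
  - intros U [r [Xr [HU | HU]]].
    + exists (fun x => sel_lt (sel_oplus X fX g) x r). split.
      * apply tau_subbase. exists r. split; [exact I|]. left. unfold fullR; tauto.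
      * intro x. rewrite HU. split; intros [H1 H2].
        -- split; [apply sel_lt_oplus_in|]; assumption.
        -- split; [|apply (sel_lt_oplus_in X fX g x r)]; assumption.
    + exists (fun x => sel_lt (sel_oplus X fX g) r x). split.
      * apply tau_subbase. exists r. split; [exact I|]. right. unfold fullR; tauto.
      * intro x. rewrite HU. split; intros [H1 H2].
        -- split; [apply sel_lt_oplus_in|]; assumption.
        -- split; [|apply (sel_lt_oplus_in X fX g r x)]; assumption.
Qed.

Lemma discrete_part_subset_Borel X fX S :
  tau_discrete X fX -> (forall x, S x -> X x) -> Borel_sel (sel_oplus X fX f_E) S.
Proof.
  intros discrete SX.
  destruct (discrete_part_trace X fX f_E S discrete SX) as [V [openV HV]].
  replace S with (fun x => V x /\ X x) by (symmetry; apply pred_ext, HV).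
  apply sigma_algebra_inter;
    [apply gen_sigma_sigma_algebra | apply tau_Borel_sel, openV | apply oplus_part_Borel].
Qed.

Inductive borel_code : Type :=
| BCempty : borel_code
| BCball : nat -> nat -> nat -> borel_code
| BCcompl : borel_code -> borel_code
| BCunion : (nat -> borel_code) -> borel_code.

(* [BCball i j n] is the open interval of radius 1/(n+1) around (i - j)/(n+1). *)
Fixpoint code_set (c : borel_code) : R -> Prop :=
  match c with
  | BCempty => fun _ => False
  | BCball i j n => fun x => Rabs (x * INR (S n) - (INR i - INR j)) < 1
  | BCcompl c => fun x => ~ code_set c x
  | BCunion f => fun x => exists k, code_set (f k) x
  end.

Definition euclid_open (O : R -> Prop) : Prop :=
  forall x, O x -> exists e, 0 < e /\ forall y, Rabs (y - x) < e -> O y.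

Lemma near_nat_difference r : exists i j : nat, Rabs (r - (INR i - INR j)) < 1.
Proof.
  destruct (archimed r) as [up_gt up_le].
  set (d := (up r - 1)%Z).
  assert (Hd : IZR d <= r < IZR d + 1) by (unfold d; rewrite minus_IZR; simpl; lra).
  exists (Z.to_nat d), (Z.to_nat (- d)).
  replace (INR (Z.to_nat d) - INR (Z.to_nat (- d))) with (IZR d).
  { apply Rabs_def1; lra. }
  rewrite !INR_IZR_INZ. destruct (Z.le_gt_cases 0 d).
  - replace (Z.to_nat (- d)) with 0%nat by lia. rewrite Z2Nat.id by lia. simpl. ring.
  - replace (Z.to_nat d) with 0%nat by lia. rewrite Z2Nat.id, opp_IZR by lia. simpl. ring.
Qed.

Lemma ball_code_within x e : 0 < e ->
  exists i j n, code_set (BCball i j n) x /\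
    forall y, code_set (BCball i j n) y -> Rabs (y - x) < e.
Proof.
  intro e_pos.
  destruct (archimed_cor1 (e / 2)) as [N [inv_N N_pos]]; [lra|].
  assert (EN : INR (S (N - 1)) = INR N) by (f_equal; lia).
  assert (N_pos' : 0 < INR N) by (apply lt_0_INR; exact N_pos).
  destruct (near_nat_difference (x * INR N)) as [i [j Hx]].
  exists i, j, (N - 1)%nat. cbn [code_set]. rewrite EN. split; [exact Hx|].
  intros y Hy.
  assert (dist_N : Rabs (y - x) * INR N < 2).
  { replace (Rabs (y - x) * INR N) with (Rabs ((y - x) * INR N))
      by (rewrite Rabs_mult, (Rabs_pos_eq (INR N)); lra).
    replace ((y - x) * INR N) with ((y * INR N - (INR i - INR j)) - (x * INR N - (INR i - INR j)))
      by ring.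
    apply Rabs_def2 in Hx, Hy. apply Rabs_def1; lra. }
  assert (INR N * / INR N = 1) by (field; lra).
  pose proof (Rabs_pos (y - x)). nra.
Qed.

Lemma euclid_open_coded O : euclid_open O -> exists c, forall x, code_set c x <-> O x.
Proof.
  intro openO.
  (* the union of all basic balls contained in O *)
  exists (BCunion (fun k => match @unpickle (nat * nat * nat)%type k with
    | Some (i, j, n) =>
        if excluded_middle_informative (forall y, code_set (BCball i j n) y -> O y)
        then BCball i j n else BCempty
    | None => BCempty end)).
  intro x. split.
  - intros [k Hk]. destruct (@unpickle (nat * nat * nat)%type k) as [[[i j] n]|]; [|destruct Hk].
    destruct (excluded_middle_informative _) as [ball_in_O|]; [exact (ball_in_O x Hk) | destruct Hk].
  - intro Ox. destruct (openO x Ox) as [e [e_pos ball_e]].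
    destruct (ball_code_within x e e_pos) as [i [j [n [Hx ball_sub]]]].
    exists (pickle (i, j, n)). rewrite pickleK.
    destruct (excluded_middle_informative _) as [_ | not_in_O]; [exact Hx|].
    exfalso. apply not_in_O. intros y Hy. apply ball_e, ball_sub, Hy.
Qed.

Definition agree_off (Y A B : R -> Prop) : Prop := forall x, ~ Y x -> (A x <-> B x).

Definition open_off (Y V : R -> Prop) : Prop := exists O, euclid_open O /\ agree_off Y V O.

Definition coded_off (Y A : R -> Prop) : Prop := exists c, agree_off Y A (code_set c).

Lemma open_off_topology Y : is_topology_on fullR (open_off Y).
Proof.
  split; [|split; [|split]].
  - intros; exact I.
  - exists fullR. split; [|intros x _; tauto].
    intros x _. exists 1. split; [lra | intros; exact I].
  - intros U V [O1 [open1 H1]] [O2 [open2 H2]].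
    exists (fun x => O1 x /\ O2 x). split.
    + intros x [O1x O2x].
      destruct (open1 x O1x) as [e1 [e1_pos ball1]], (open2 x O2x) as [e2 [e2_pos ball2]].
      exists (Rmin e1 e2). split; [apply Rmin_pos; assumption|].
      intros y Hy. pose proof (Rmin_l e1 e2). pose proof (Rmin_r e1 e2).
      split; [apply ball1 | apply ball2]; lra.
    + intros x nYx. rewrite (H1 x nYx), (H2 x nYx). tauto.
  - intros F HF.
    exists (fun x => exists V O, F V /\ euclid_open O /\ agree_off Y V O /\ O x). split.
    + intros x [V [O [FV [openO [HO Ox]]]]]. destruct (openO x Ox) as [e [e_pos ball]].
      exists e. split; [exact e_pos|]. intros y Hy. exists V, O. auto.
    + intros x nYx. split.
      * intros [V [FV Vx]]. destruct (HF V FV) as [O [openO HO]].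
        exists V, O. split; [exact FV|]. split; [exact openO|]. split; [exact HO|].
        apply (HO x nYx), Vx.
      * intros [V [O [FV [_ [HO Ox]]]]]. exists V. split; [exact FV|]. apply (HO x nYx), Ox.
Qed.

Lemma oplus_subbase_open_off Y fY U :
  sel_subbase fullR (sel_oplus Y fY f_E) U -> open_off Y U.
Proof.
  assert (empty_open : euclid_open (fun _ => False)) by (intros x []).
  assert (full_open : euclid_open fullR) by (intros x _; exists 1; split; [lra | intros; exact I]).
  assert (lt_open : forall r, euclid_open (fun x => x < r)).
  { intros r x lt. exists (r - x). split; [lra|]. intros y Hy. apply Rabs_def2 in Hy. lra. }
  assert (gt_open : forall r, euclid_open (fun x => r < x)).
  { intros r x lt. exists (x - r). split; [lra|]. intros y Hy. apply Rabs_def2 in Hy. lra. }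
  intros [r [_ [HU | HU]]]; destruct (classic (Y r)) as [Yr | nYr].
  - exists (fun _ => False). split; [exact empty_open|]. intros x nYx. rewrite HU.
    pose proof (sel_lt_oplus_out_in Y fY f_E x r nYx Yr). tauto.
  - exists (fun x => x < r). split; [apply lt_open|]. intros x nYx. rewrite HU.
    rewrite (sel_lt_oplus_out Y fY f_E x r nYx nYr), sel_lt_f_E. unfold fullR; tauto.
  - exists fullR. split; [exact full_open|]. intros x nYx. rewrite HU.
    pose proof (sel_lt_oplus_in_out Y fY f_E r x Yr nYx). unfold fullR; tauto.
  - exists (fun x => r < x). split; [apply gt_open|]. intros x nYx. rewrite HU.
    rewrite (sel_lt_oplus_out Y fY f_E r x nYr nYx), sel_lt_f_E. unfold fullR; tauto.
Qed.

Lemma coded_off_sigma_algebra Y : is_sigma_algebra (coded_off Y).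
Proof.
  split; [|split].
  - exists (BCcompl BCempty). intros x _. simpl. unfold fullR. tauto.
  - intros A [c Hc]. exists (BCcompl c). intros x nYx. simpl. rewrite (Hc x nYx). tauto.
  - intros A HA. destruct (choice (fun n c => agree_off Y (A n) (code_set c)) HA) as [c Hc].
    exists (BCunion c). intros x nYx. simpl. split.
    + intros [n Hn]. exists n. apply (Hc n x nYx), Hn.
    + intros [n Hn]. exists n. apply (Hc n x nYx), Hn.
Qed.

Lemma oplus_Borel_coded_off Y fY A :
  Borel_sel (sel_oplus Y fY f_E) A -> coded_off Y A.
Proof.
  intro BorelA. apply BorelA; [apply coded_off_sigma_algebra|].
  intros U openU.
  destruct (openU (open_off Y) (open_off_topology Y) (oplus_subbase_open_off Y fY))
    as [O [openO HO]].
  destruct (euclid_open_coded O openO) as [c Hc].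
  exists c. intros x nYx. rewrite (HO x nYx). symmetry. apply Hc.
Qed.

(* A code is determined by the labels of its nodes, addressed by paths. *)
Fixpoint code_label (c : borel_code) (p : list nat) : nat :=
  match c, p with
  | BCempty, _ => 0
  | BCball i j n, _ => 3 + pickle (i, j, n)
  | BCcompl _, nil => 1
  | BCcompl c, cons _ p => code_label c p
  | BCunion _, nil => 2
  | BCunion f, cons k p => code_label (f k) p
  end.

Lemma code_label_inj c1 c2 : (forall p, code_label c1 p = code_label c2 p) -> c1 = c2.
Proof.
  revert c2.
  induction c1 as [| i j n | c IH | f IH]; intros c2 H;
    destruct c2 as [| i' j' n' | c' | f']; try (specialize (H nil); simpl in H; lia).
  - reflexivity.
  - specialize (H nil). simpl in H.
    assert (E : pickle (i, j, n) = pickle (i', j', n')) by lia.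
    apply (pcan_inj pickleK) in E. injection E. intros -> -> ->. reflexivity.
  - f_equal. apply IH. intro p. exact (H (cons 0%nat p)).
  - f_equal. apply functional_extensionality. intro k. apply IH. intro p. exact (H (cons k p)).
Qed.

Definition graph_bits (F : list nat -> nat) (k : nat) : bool :=
  match @unpickle (list nat * nat)%type k with
  | Some (p, m) => Nat.eqb (F p) m
  | None => false
  end.

Lemma graph_bits_inj F G : graph_bits F = graph_bits G -> forall p, F p = G p.
Proof.
  intros H p. symmetry. apply Nat.eqb_eq.
  assert (E := f_equal (fun b => b (pickle (p, F p))) H).
  unfold graph_bits in E. rewrite pickleK, Nat.eqb_refl in E. symmetry. exact E.
Qed.

Fixpoint cantor_sum (b : nat -> bool) (n : nat) : R :=
  match n with
  | O => 0
  | S m => cantor_sum b m + (if b m then 2 / 3 ^ S m else 0)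
  end.

Lemma cantor_sum_increment b m k :
  0 <= cantor_sum b (k + m) - cantor_sum b m <= / 3 ^ m - / 3 ^ (k + m).
Proof.
  induction k as [|k IH]; simpl; [lra|].
  assert (pos : 0 < / 3 ^ (k + m)) by (apply Rinv_0_lt_compat, pow_lt; lra).
  rewrite Rinv_mult. unfold Rdiv. rewrite Rinv_mult.
  destruct (b (k + m)%nat); lra.
Qed.

Lemma cantor_sum_le b m n : cantor_sum b n <= cantor_sum b m + / 3 ^ m.
Proof.
  assert (pos : 0 < / 3 ^ m) by (apply Rinv_0_lt_compat, pow_lt; lra).
  destruct (Nat.le_gt_cases m n) as [le | gt].
  - replace n with ((n - m) + m)%nat by lia.
    pose proof (cantor_sum_increment b m (n - m)).
    assert (0 < / 3 ^ (n - m + m)) by (apply Rinv_0_lt_compat, pow_lt; lra). lra.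
  - pose proof (cantor_sum_increment b n (m - n)) as H.
    replace (m - n + n)%nat with m in H by lia. lra.
Qed.

Lemma cantor_sum_bounded b : bound (fun y => exists n, y = cantor_sum b n).
Proof.
  exists 1. intros y [n ->]. pose proof (cantor_sum_le b 0 n). simpl in *. lra.
Qed.

Definition cantor (b : nat -> bool) : R :=
  proj1_sig (completeness _ (cantor_sum_bounded b) (ex_intro _ 0 (ex_intro _ O eq_refl))).

Lemma cantor_sum_le_cantor b n : cantor_sum b n <= cantor b.
Proof.
  unfold cantor. apply (proj1 (proj2_sig (completeness _ _ _))). exists n. reflexivity.
Qed.

Lemma cantor_le_cantor_sum b m : cantor b <= cantor_sum b m + / 3 ^ m.
Proof.
  unfold cantor. apply (proj2 (proj2_sig (completeness _ _ _))).
  intros y [n ->]. apply cantor_sum_le.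
Qed.

Lemma cantor_sum_prefix b b' k :
  (forall i, (i < k)%nat -> b i = b' i) -> cantor_sum b k = cantor_sum b' k.
Proof.
  induction k as [|k IH]; intros H; simpl; [reflexivity|].
  rewrite IH by (intros; apply H; lia). rewrite (H k) by lia. reflexivity.
Qed.

Lemma cantor_lt_first_diff b b' k :
  (forall i, (i < k)%nat -> b i = b' i) -> b k = false -> b' k = true -> cantor b < cantor b'.
Proof.
  intros prefix bk b'k.
  pose proof (cantor_le_cantor_sum b (S k)). pose proof (cantor_sum_le_cantor b' (S k)).
  simpl in *. rewrite bk, b'k, (cantor_sum_prefix b b' k prefix) in *.
  assert (0 < / (3 * 3 ^ k)) by (apply Rinv_0_lt_compat; pose proof (pow_lt 3 k); lra).
  unfold Rdiv in *. lra.
Qed.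

Lemma cantor_inj b b' : cantor b = cantor b' -> b = b'.
Proof.
  intro E. apply functional_extensionality. intro n.
  induction n as [n IH] using lt_wf_ind.
  destruct (b n) eqn:bn, (b' n) eqn:b'n; try reflexivity; exfalso.
  - pose proof (cantor_lt_first_diff b' b n (fun i lt => eq_sym (IH i lt)) b'n bn). lra.
  - pose proof (cantor_lt_first_diff b b' n IH bn b'n). lra.
Qed.

Definition code_real (c : borel_code) : R := cantor (graph_bits (code_label c)).

Lemma code_real_inj c1 c2 : code_real c1 = code_real c2 -> c1 = c2.
Proof. intro E. apply code_label_inj, graph_bits_inj, cantor_inj, E. Qed.

Lemma diagonal_subset (T I : Type) (Z : T -> Prop) (g : {x | Z x} -> I) (F : I -> T -> Prop) :
  (forall i, exists z, g z = i) ->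
  exists S, (forall x, S x -> Z x) /\ forall i, exists x, Z x /\ ~ (S x <-> F i x).
Proof.
  intro g_onto.
  exists (fun x => exists p : Z x, ~ F (g (exist _ x p)) x). split.
  - intros x [p _]. exact p.
  - intro i. destruct (g_onto i) as [[z p] <-]. exists z. split; [exact p|].
    intro H. destruct (classic (F (g (exist _ z p)) z)) as [Fz | nFz].
    + destruct (proj2 H Fz) as [q nFz]. rewrite (proof_irrelevance _ q p) in nFz. exact (nFz Fz).
    + apply nFz, H. exists p. exact nFz.
Qed.

Theorem lemma3p5 (X Y : R -> Prop) (fX fY : R -> R -> R) :
  has_card_c X -> has_card_c Y ->
  has_card_c (fun x => X x /\ ~ Y x) ->
  is_selection X fX -> tau_discrete X fX ->
  is_selection Y fY -> tau_discrete Y fY ->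
  ~ (forall A : R -> Prop,
       Borel_sel (sel_oplus X fX f_E) A <-> Borel_sel (sel_oplus Y fY f_E) A).
Proof.
  intros _ _ [g [_ g_onto]] _ discreteX _ _ same_Borel.
  set (set_of_real := fun r x => exists c, code_real c = r /\ code_set c x).
  destruct (diagonal_subset R R _ g set_of_real g_onto) as [S [S_sub S_diag]].
  assert (BorelS : Borel_sel (sel_oplus Y fY f_E) S).
  { apply (proj1 (same_Borel S)), (discrete_part_subset_Borel X fX S discreteX).
    intros x Sx. exact (proj1 (S_sub x Sx)). }
  destruct (oplus_Borel_coded_off Y fY S BorelS) as [c Hc].
  destruct (S_diag (code_real c)) as [x [[_ nYx] not_agree]].
  apply not_agree. rewrite (Hc x nYx). split.
  - intro cx. exists c. auto.
  - intros [c' [E c'x]]. apply code_real_inj in E. subst c'. exact c'x.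
Qed.
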